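(* Let $S$ be any language over alphabet $\Sigma$ and let $\Delta=\{(x,n)\in\Sigma^*\times\mathbb{N}\mid |x|\leq n\}$. If $S$ belongs to $\mathrm{1QFA}/n$, then there exist two constants $c,d\in\mathbb{N}^{+}$, an equivalence relation $\equiv_S$ over $\Delta$, a partial order $\leq_S$ over $\Delta$, and a closeness relation $\cong$ over $\Delta$ satisfying the following seven conditions, where $(x,n),(y,n)\in\Delta$, $z\in\Sigma^*$, $\sigma\in\Sigma$ and $|x|=|y|$: 1. The set $\Delta/\!\equiv_S$ of equivalence classes is finite. 2. If $(x,n)\cong(y,n)$, then $(x,n)\equiv_S(y,n)$. 3. If $|x\sigma|\leq n$, then $(x\sigma,n)\leq_S(x,n)$. 4. If $|xz|\leq n$, $(x,n)=_S(xz,n)$, $(y,n)=_S(yz,n)$, and $(xz,n)\cong(yz,n)$, then $(x,n)\equiv_S(y,n)$. 5. $(x,n)\equiv_S(y,n)$ iff $S(xz)=S(yz)$ for all strings $z\in\Sigma^*$ with $|xz|=n$. 6. Any strictly descending chain (w.r.t. $\leq_S$) in $\Delta$ has length at most $c$. 7. Any $\cong$-discrepancy subset of $\Delta$ has cardinality at most $d$.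
   Context: A 1qfa is a one-way measure-many quantum finite automaton (input between endmarkers, one unitary per scanned symbol followed at each step by a projection measurement onto accepting/rejecting/non-halting subspaces). For equal-length strings $x,y$, $\genfrac{[}{]}{0pt}{}{x}{y}$ is the two-track string with $x$ on the upper track and $y$ on the lower. $\mathrm{1QFA}/n$ is the family of languages $L$ for which there exist a 1qfa $M$, $\varepsilon\in[0,1/2)$, an advice alphabet $\Gamma$, and an advice function $h:\mathbb{N}\to\Gamma^*$ with $|h(n)|=n$ such that $M$ on $\genfrac{[}{]}{0pt}{}{x}{h(|x|)}$ outputs $L(x)$ with probability at least $1-\varepsilon$ for all $x$. $S(w)$ denotes the characteristic function of $S$. For a partial order $\leq$, $x=y$ means $x\leq y$ and $y\leq x$, and $x<y$ means $x\leq y$ and $x\neq y$; a strictly descending chain of length $m$ is a sequence $(s_1,\dots,s_m)$ with $s_{i+1}<s_i$ for all $i\in[m-1]$. A closeness relation is a reflexive, symmetric binary relation; for a closeness relation $\cong$, a $\cong$-discrepancy set is a set in which any two distinct elements $x,y$ satisfy $x\not\cong y$. *)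

From HB Require Import structures.
From mathcomp Require Import all_boot all_order all_algebra.
From mathcomp Require Import reals.
From mathcomp Require Import complex.

Set Implicit Arguments.
Unset Strict Implicit.
Unset Printing Implicit Defensive.

Import Order.TTheory GRing.Theory Num.Theory.
Local Open Scope ring_scope.

(* One-way measure-many quantum finite automata (Kondacs-Watrous).     *)

Section QFA.
Variable R : realType.
Local Notation C := (R[i]).

Definition adjmx (Q : nat) (A : 'M[C]_Q) : 'M[C]_Q := (map_mx (@conjc R) A)^T.

Definition unitarymx (Q : nat) (A : 'M[C]_Q) : Prop := A *m adjmx A = 1%:M.

Record qfa (A : finType) := Qfa {
  qfa_nst : nat;
  qfa_U : A -> 'M[C]_qfa_nst;
  qfa_Ucent : 'M[C]_qfa_nst;
  qfa_Udollar : 'M[C]_qfa_nst;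
  qfa_q0 : 'I_qfa_nst;
  qfa_acc : {set 'I_qfa_nst};
  qfa_rej : {set 'I_qfa_nst};
  qfa_U_unitary : forall a, unitarymx (qfa_U a);
  qfa_Ucent_unitary : unitarymx qfa_Ucent;
  qfa_Udollar_unitary : unitarymx qfa_Udollar;
  qfa_acc_rej_disj : [disjoint qfa_acc & qfa_rej]
}.

Definition projv (Q : nat) (S : {set 'I_Q}) (v : 'cV[C]_Q) : 'cV[C]_Q :=
  \col_i (if i \in S then v i 0 else 0).

Definition sqnorm (Q : nat) (v : 'cV[C]_Q) : R :=
  \sum_i ((@complex.Re R (v i 0)) ^+ 2 + (@complex.Im R (v i 0)) ^+ 2).

Variable A : finType.
Variable M : qfa A.
Local Notation Q := (qfa_nst M).

(* configuration: (non-halting unnormalized state, acc. prob., rej. prob.) *)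
Definition qfa_step (U : 'M[C]_Q) (c : 'cV[C]_Q * R * R) : 'cV[C]_Q * R * R :=
  let: (psi, pa, pr) := c in
  let phi := U *m psi in
  (projv (~: (qfa_acc M :|: qfa_rej M)) phi,
   pa + sqnorm (projv (qfa_acc M) phi),
   pr + sqnorm (projv (qfa_rej M) phi)).

Definition qfa_run (w : seq A) : 'cV[C]_Q * R * R :=
  qfa_step (qfa_Udollar M)
    (foldl (fun c a => qfa_step (qfa_U M a) c)
       (qfa_step (qfa_Ucent M) (delta_mx (qfa_q0 M) 0, 0, 0)) w).

Definition qfa_accprob (w : seq A) : R := (qfa_run w).1.2.
Definition qfa_rejprob (w : seq A) : R := (qfa_run w).2.

End QFA.

Definition track2 (S G : Type) (x : seq S) (y : seq G) : seq (S * G) := zip x y.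

Definition in_1QFA_n (R : realType) (Sigma : finType) (L : seq Sigma -> bool) : Prop :=
  exists (Gamma : finType) (h : nat -> seq Gamma) (M : qfa R (Sigma * Gamma)%type)
         (eps : R),
    [/\ 0 <= eps, eps < 1 / 2, (forall n, size (h n) = n) &
      forall x : seq Sigma,
        if L x then 1 - eps <= qfa_accprob M (track2 x (h (size x)))
        else 1 - eps <= qfa_rejprob M (track2 x (h (size x)))].

Definition Delta (Sigma : Type) := {p : seq Sigma * nat | (size p.1 <= p.2)%N}.

Section Rels.
Variable T : Type.

Definition is_equivalence (r : T -> T -> Prop) : Prop :=
  [/\ forall a, r a a, forall a b, r a b -> r b a &
      forall a b c, r a b -> r b c -> r a c].

(* "partial order" in the paper's sense: = is defined as mutual <=, so
   only reflexivity and transitivity are used. *)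
Definition is_preorder (r : T -> T -> Prop) : Prop :=
  (forall a, r a a) /\ (forall a b c, r a b -> r b c -> r a c).

Definition is_closeness (r : T -> T -> Prop) : Prop :=
  (forall a, r a a) /\ (forall a b, r a b -> r b a).

Definition finite_quotient (r : T -> T -> Prop) : Prop :=
  exists (k : nat) (f : nat -> T), forall a, exists2 i, (i < k)%N & r a (f i).

Definition ord_eq (le : T -> T -> Prop) a b := le a b /\ le b a.
Definition ord_lt (le : T -> T -> Prop) a b := le a b /\ ~ ord_eq le a b.

Fixpoint desc_chain (le : T -> T -> Prop) (s : seq T) : Prop :=
  match s with
  | a :: ((b :: _) as t) => ord_lt le b a /\ desc_chain le t
  | _ => True
  end.

End Rels.

Definition discrepancy_list (T : eqType) (r : T -> T -> Prop) (s : seq T) : Prop :=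
  uniq s /\ (forall a b, a \in s -> b \in s -> a != b -> ~ r a b).

Definition dstr (Sigma : Type) (p : Delta Sigma) : seq Sigma := (proj1_sig p).1.
Definition dlen (Sigma : Type) (p : Delta Sigma) : nat := (proj1_sig p).2.

From Pilot Require Import Defs.
From HB Require Import structures.
From mathcomp Require Import all_boot all_order all_algebra.
From mathcomp Require Import reals complex boolp.
From mathcomp Require Import lra ring.
Import Order.TTheory GRing.Theory Num.Theory.
Set Implicit Arguments. Unset Strict Implicit. Unset Printing Implicit Defensive.
Local Open Scope ring_scope.

(* After reading x against its advice, the automaton is in a configuration
   (psi, p_acc, p_rej): the unnormalised non-halting state and the halting
   probabilities so far.  Two configurations whose accepting probabilities
   and non-halting states are close enough give the same decision after every
   common suffix, because the potential
     p_acc1 - (1 + t) p_acc2 + (1 + 1/t) |psi1 - psi2|^2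
   never increases under a unitary step followed by measurement.  Discretising
   (psi, p_acc) on a fine grid gives the closeness relation (equal cells,
   finitely many of them), and discretising |psi|^2 gives the order, which can
   only decrease along a word and has bounded height.  If the rank does not
   drop from x to xz, almost nothing halts on z; since |psi1 + psi2|^2 never
   increases, the parallelogram law then carries the closeness of xz and yz
   back to x and y. *)

Section KernelRelations.
Variables (T : Type) (K : finType) (f : T -> K).

Lemma kernel_equivalence : is_equivalence (fun a b => f a = f b).
Proof. by split=> [a | a b -> | a b c -> ->]. Qed.

Lemma finite_quotient_kernel (a0 : T) : finite_quotient (fun a b => f a = f b).
Proof.
pose rep i := if pselect (exists a, f a = nth (f a0) (enum K) i) is left ex
  then proj1_sig (cid ex) else a0.
exists #|K|, rep => a; exists (index (f a) (enum K)).
  by rewrite cardE index_mem mem_enum.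
rewrite /rep; case: pselect => [ex | []]; last first.
  by exists a; rewrite nth_index // mem_enum.
by case: (cid ex) => b /= ->; rewrite nth_index // mem_enum.
Qed.

End KernelRelations.

Lemma desc_chain_measure (T : Type) (m : T -> nat) (B : nat) (s : seq T) :
  (forall a, m a <= B)%N -> desc_chain (fun a b => m a <= m b)%N s ->
  (size s <= B.+1)%N.
Proof.
move=> m_le; case: s => [|a s] // chain.
suff le_sm : (size (a :: s) <= (m a).+1)%N by apply: leq_trans le_sm _; rewrite ltnS.
elim: s a chain => [|b s IHs] a //= [[le_ba not_eq] chain].
rewrite ltnS; apply: leq_trans (IHs b chain) _; rewrite ltn_neqAle le_ba andbT.
by apply/eqP=> eq_ba; apply: not_eq; rewrite /ord_eq eq_ba.
Qed.

Lemma discrepancy_kernel_size (T : eqType) (K : finType) (f : T -> K) s :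
  discrepancy_list (fun a b => f a = f b) s -> (size s <= #|K|)%N.
Proof.
case=> uniq_s apart; rewrite -(size_map f) -(card_uniqP _) ?max_card //.
rewrite map_inj_in_uniq // => a b a_s b_s fab.
by apply/eqP/negPn/negP=> neq_ab; apply: (apart a b).
Qed.

Section SquaredNorm.
Variables (R : realType) (Q : nat).
Implicit Types (u v : 'cV[R[i]]_Q) (S : {set 'I_Q}).

Lemma sqnorm_ge0 v : 0 <= sqnorm v.
Proof. by apply: sumr_ge0 => i _; apply: addr_ge0; apply: sqr_ge0. Qed.

Lemma sqnorm_coord_le v i :
  complex.Re (v i 0) ^+ 2 + complex.Im (v i 0) ^+ 2 <= sqnorm v.
Proof.
rewrite /sqnorm (bigD1 i) //= lerDl.
by apply: sumr_ge0 => j _; apply: addr_ge0; apply: sqr_ge0.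
Qed.

Lemma sqnormN v : sqnorm (- v) = sqnorm v.
Proof.
by apply: eq_bigr => i _; rewrite mxE; case: (v i 0) => a b /=; rewrite !sqrrN.
Qed.

Lemma sqnorm_parallelogram u v :
  sqnorm (u + v) + sqnorm (u - v) = 2 * sqnorm u + 2 * sqnorm v.
Proof.
rewrite /sqnorm -big_split !mulr_sumr -big_split /=; apply: eq_bigr => i _.
by rewrite !mxE; case: (u i 0) => a b; case: (v i 0) => c d /=; ring.
Qed.

Lemma sqnormD_young (t : R) u v : 0 < t ->
  sqnorm (u + v) <= (1 + t) * sqnorm u + (1 + t^-1) * sqnorm v.
Proof.
move=> t_gt0.
have young (a b : R) : (a + b) ^+ 2 <= (1 + t) * a ^+ 2 + (1 + t^-1) * b ^+ 2.
  have -> : (1 + t) * a ^+ 2 + (1 + t^-1) * b ^+ 2 =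
            (a + b) ^+ 2 + (t * a - b) ^+ 2 / t by field; rewrite gt_eqF.
  by rewrite lerDl divr_ge0 ?sqr_ge0 ?ltW.
rewrite /sqnorm !mulr_sumr -big_split /=; apply: ler_sum => i _.
rewrite mxE; case: (u i 0) => a b; case: (v i 0) => c d /=.
by have := young a c; have := young b d; lra.
Qed.

Lemma projvD S u v : Defs.projv S (u + v) = Defs.projv S u + Defs.projv S v.
Proof. by apply/matrixP => i j; rewrite !mxE; case: (i \in S); rewrite ?addr0. Qed.

Lemma projvN S v : Defs.projv S (- v) = - Defs.projv S v.
Proof. by apply/matrixP => i j; rewrite !mxE; case: (i \in S); rewrite ?oppr0. Qed.

Lemma sqnorm_projv_le S v : sqnorm (Defs.projv S v) <= sqnorm v.
Proof.
apply: ler_sum => i _; rewrite mxE; case: (i \in S) => //=.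
by rewrite expr0n /= addr0; apply: addr_ge0; apply: sqr_ge0.
Qed.

Lemma sqnorm_projv_split (A B : {set 'I_Q}) v : [disjoint A & B] ->
  sqnorm v = sqnorm (Defs.projv (~: (A :|: B)) v) + sqnorm (Defs.projv A v)
             + sqnorm (Defs.projv B v).
Proof.
move=> disjAB; rewrite /sqnorm -!big_split /=; apply: eq_bigr => i _.
rewrite !mxE in_setC in_setU.
case iA: (i \in A); case iB: (i \in B) => /=; rewrite ?expr0n /= ?addr0 ?add0r //.
by move: disjAB => /disjointFr /(_ iA); rewrite iB.
Qed.

Lemma sqnorm_unitary (U : 'M[R[i]]_Q) v : Defs.unitarymx U -> sqnorm (U *m v) = sqnorm v.
Proof.
have sqnormE w : real_complex R (sqnorm w) = ((map_mx (@conjc R) w)^T *m w) 0 0.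
  rewrite /sqnorm mxE raddf_sum; apply: eq_bigr => j _.
  rewrite !mxE; case: (w j 0) => a b /=.
  by apply/eqP; rewrite eq_complex /=; apply/andP; split; apply/eqP; ring.
move=> /mulmx1C UU; apply: (@complexI R); rewrite !sqnormE.
rewrite map_mxM trmx_mul -mulmxA (mulmxA _ U).
by move: UU; rewrite /Defs.adjmx => ->; rewrite mul1mx.
Qed.

End SquaredNorm.

Section Configurations.
Variables (R : realType) (Q : nat).
Implicit Types c : 'cV[R[i]]_Q * R * R.

Definition mass c := c.1.2 + c.2 + sqnorm c.1.1.

Definition normalized c := [/\ mass c = 1, 0 <= c.1.2 & 0 <= c.2].

Lemma normalized_bounds c : normalized c -> sqnorm c.1.1 <= 1 /\ c.1.2 <= 1.
Proof.
by case; rewrite /mass => mass1 acc_ge0 rej_ge0; have := sqnorm_ge0 c.1.1; lra.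
Qed.

End Configurations.

Section Runs.
Variables (R : realType) (A : finType) (M : qfa R A).
Local Notation Q := (qfa_nst M).
Implicit Types (c : 'cV[R[i]]_Q * R * R) (U : 'M[R[i]]_Q) (w : seq A).

Definition steps c w := foldl (fun c a => qfa_step (qfa_U M a) c) c w.

Definition run_from c w := qfa_step (qfa_Udollar M) (steps c w).

Definition init_cfg := qfa_step (qfa_Ucent M) (delta_mx (qfa_q0 M) 0, 0, 0).

Lemma step_mass U c : Defs.unitarymx U -> mass (qfa_step U c) = mass c.
Proof.
move=> unitU; case: c => [[psi pa] pr]; rewrite /mass /=.
rewrite -(sqnorm_unitary psi unitU) (sqnorm_projv_split (U *m psi) (qfa_acc_rej_disj M)).
ring.
Qed.

Lemma step_acc_rej_le U c : c.1.2 <= (qfa_step U c).1.2 /\ c.2 <= (qfa_step U c).2.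
Proof. by case: c => [[psi pa] pr] /=; split; rewrite lerDl sqnorm_ge0. Qed.

Lemma normalized_step U c : Defs.unitarymx U -> normalized c -> normalized (qfa_step U c).
Proof.
move=> unitU [mass1 acc_ge0 rej_ge0]; have [accU rejU] := step_acc_rej_le U c.
by split; rewrite ?step_mass //; [apply: le_trans accU | apply: le_trans rejU].
Qed.

Lemma normalized_init : normalized init_cfg.
Proof.
apply: normalized_step; first exact: qfa_Ucent_unitary.
split=> //=; rewrite /mass /= !add0r /sqnorm (bigD1 (qfa_q0 M)) //= big1.
  by rewrite mxE !eqxx /= expr1n expr0n !addr0.
by move=> i /negbTE neq_i; rewrite mxE neq_i /= expr0n addr0.
Qed.

Lemma steps_mass c w : mass (steps c w) = mass c.
Proof.
by elim: w c => [|a w IHw] c //=; rewrite IHw step_mass //; apply: qfa_U_unitary.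
Qed.

Lemma steps_acc_rej_le c w : c.1.2 <= (steps c w).1.2 /\ c.2 <= (steps c w).2.
Proof.
elim: w c => [|a w IHw] c /=; first by rewrite !lexx.
have [accU rejU] := step_acc_rej_le (qfa_U M a) c.
have [accw rejw] := IHw (qfa_step (qfa_U M a) c).
by split; [apply: le_trans accw | apply: le_trans rejw].
Qed.

Lemma normalized_steps c w : normalized c -> normalized (steps c w).
Proof.
by elim: w c => [|a w IHw] c //= norm_c; apply/IHw/normalized_step/norm_c/qfa_U_unitary.
Qed.

Lemma steps_acc_gain c w :
  0 <= (steps c w).1.2 - c.1.2 <= sqnorm c.1.1 - sqnorm (steps c w).1.1.
Proof.
have := steps_mass c w; have [accw rejw] := steps_acc_rej_le c w.
by rewrite /mass => massE; apply/andP; split; lra.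
Qed.

(* The non-halting parts evolve by the contraction psi |-> P U psi. *)
Lemma steps_stateD_le c1 c2 w :
  sqnorm ((steps c1 w).1.1 + (steps c2 w).1.1) <= sqnorm (c1.1.1 + c2.1.1).
Proof.
elim: w c1 c2 => [|a w IHw] c1 c2 //=; apply: le_trans (IHw _ _) _.
case: c1 c2 => [[psi1 _] _] [[psi2 _] _] /=; rewrite -projvD -mulmxDr.
by rewrite -(sqnorm_unitary (psi1 + psi2) (qfa_U_unitary M a)) sqnorm_projv_le.
Qed.

Lemma steps_stateB_le c1 c2 w :
  sqnorm (c1.1.1 - c2.1.1) <=
    sqnorm ((steps c1 w).1.1 - (steps c2 w).1.1)
    + 2 * (sqnorm c1.1.1 - sqnorm (steps c1 w).1.1)
    + 2 * (sqnorm c2.1.1 - sqnorm (steps c2 w).1.1).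
Proof.
have := sqnorm_parallelogram c1.1.1 c2.1.1.
have := sqnorm_parallelogram (steps c1 w).1.1 (steps c2 w).1.1.
by have := steps_stateD_le c1 c2 w; lra.
Qed.

Definition potential (t : R) c1 c2 :=
  c1.1.2 - (1 + t) * c2.1.2 + (1 + t^-1) * sqnorm (c1.1.1 - c2.1.1).

Lemma step_potential_le t U c1 c2 : 0 < t -> Defs.unitarymx U ->
  potential t (qfa_step U c1) (qfa_step U c2) <= potential t c1 c2.
Proof.
move=> t_gt0 unitU.
case: c1 c2 => [[psi1 pa1] pr1] [[psi2 pa2] pr2]; rewrite /potential /=.
set phi1 := U *m psi1; set phi2 := U *m psi2.
have diffE : sqnorm (psi1 - psi2) = sqnorm (phi1 - phi2).
  by rewrite -mulmxBr sqnorm_unitary.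
have young := sqnormD_young (Defs.projv (qfa_acc M) phi2)
  (Defs.projv (qfa_acc M) (phi1 - phi2)) t_gt0.
rewrite -projvD addrC subrK in young.
have tinv_ge0 : 0 <= 1 + t^-1 by rewrite addr_ge0 // invr_ge0 ltW.
have := mulr_ge0 tinv_ge0 (sqnorm_ge0 (Defs.projv (qfa_rej M) (phi1 - phi2))).
rewrite diffE (sqnorm_projv_split (phi1 - phi2) (qfa_acc_rej_disj M)) -projvN -projvD.
by rewrite !mulrDr in young *; lra.
Qed.

Lemma steps_potential_le t c1 c2 w : 0 < t ->
  potential t (steps c1 w) (steps c2 w) <= potential t c1 c2.
Proof.
move=> t_gt0; elim: w c1 c2 => [|a w IHw] c1 c2 //=.
by apply: le_trans (IHw _ _) _; apply: step_potential_le => //; apply: qfa_U_unitary.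
Qed.

Definition acc_tol (eps : R) := (1 - 2 * eps) / 4.

Definition state_tol (eps : R) := acc_tol eps / (1 + (acc_tol eps)^-1).

Lemma acc_tol_gt0 eps : eps < 1 / 2 -> 0 < acc_tol eps.
Proof. by rewrite /acc_tol; lra. Qed.

Lemma state_tol_gt0_le eps : eps < 1 / 2 -> 0 < state_tol eps <= acc_tol eps.
Proof.
move=> /acc_tol_gt0 t_gt0.
have tinv_ge1 : 1 <= 1 + (acc_tol eps)^-1 by rewrite lerDl invr_ge0 ltW.
have tinv_gt0 := lt_le_trans ltr01 tinv_ge1.
by rewrite divr_gt0 //= /state_tol ler_pdivrMr // ler_peMr ?(ltW t_gt0).
Qed.

(* With t := acc_tol eps the potential starts at most 2 t, ends at least
   1 - 2 eps - t eps, and 4 t = 1 - 2 eps. *)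
Lemma accept_reject_apart eps c1 c2 w : eps < 1 / 2 -> normalized c2 ->
  1 - eps <= (run_from c1 w).1.2 -> 1 - eps <= (run_from c2 w).2 ->
  c1.1.2 - c2.1.2 <= acc_tol eps -> sqnorm (c1.1.1 - c2.1.1) <= state_tol eps ->
  False.
Proof.
move=> eps_lt norm2 acc1 rej2 dacc dstate.
have t_gt0 := acc_tol_gt0 eps_lt; set t := acc_tol eps in t_gt0 dacc dstate.
have tE : 4 * t = 1 - 2 * eps by rewrite /t /acc_tol; field.
have tinv_gt0 : 0 < 1 + t^-1 by rewrite addr_gt0 ?invr_gt0.
have {}dstate : (1 + t^-1) * sqnorm (c1.1.1 - c2.1.1) <= t.
  by rewrite mulrC -ler_pdivlMr.
have drop := le_trans (step_potential_le (steps c1 w) (steps c2 w) t_gt0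
  (qfa_Udollar_unitary M)) (steps_potential_le c1 c2 w t_gt0).
have [mass2 _ _] :=
  normalized_step (qfa_Udollar_unitary M) (normalized_steps w norm2).
case: norm2 => _ acc2_ge0 _.
set f1 := qfa_step _ (steps c1 w) in acc1 drop.
set f2 := qfa_step _ (steps c2 w) in rej2 drop mass2.
have f2_acc : f2.1.2 <= eps.
  by move: mass2; rewrite /mass; have := sqnorm_ge0 f2.1.1; lra.
have := mulr_ge0 (ltW tinv_gt0) (sqnorm_ge0 (f1.1.1 - f2.1.1)).
have := mulr_ge0 (ltW t_gt0) acc2_ge0.
have := ler_wpM2l (ltW t_gt0) f2_acc.
have : t * eps < t * (1 / 2) by rewrite ltr_pM2l.
by move: drop; rewrite /potential; lra.
Qed.

End Runs.

Section Grid.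
Variables (R : realType) (Q N : nat).
Hypothesis N_gt0 : (0 < N)%N.
Implicit Types c : 'cV[R[i]]_Q * R * R.

Lemma truncn_eq_close (a b : R) : 0 <= a -> 0 <= b ->
  Num.truncn (a * N%:R) = Num.truncn (b * N%:R) -> `|a - b| < N%:R^-1.
Proof.
move=> a_ge0 b_ge0 eq_ab; have N_gt0' : (0 : R) < N%:R by rewrite ltr0n.
have /andP[a_lb a_ub] := truncn_itv (mulr_ge0 a_ge0 (ltW N_gt0')).
have /andP[b_lb b_ub] := truncn_itv (mulr_ge0 b_ge0 (ltW N_gt0')).
rewrite eq_ab -natr1 in a_lb a_ub; rewrite -natr1 in b_ub.
rewrite -[N%:R^-1]mul1r ltr_pdivlMr // -[X in _ * X](ger0_norm (ltW N_gt0')).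
by rewrite -normrM mulrBl ltr_norml; apply/andP; split; lra.
Qed.

Definition bucket (u : R) : 'I_(2 * N).+1 := inord (Num.truncn ((u + 1) * N%:R)).

Lemma bucket_close u v : -1 <= u <= 1 -> -1 <= v <= 1 ->
  bucket u = bucket v -> `|u - v| < N%:R^-1.
Proof.
have trunc_lt (x : R) : -1 <= x <= 1 -> (Num.truncn ((x + 1) * N%:R) < (2 * N).+1)%N.
  case/andP=> _ x_le1; rewrite ltnS -[(2 * N)%N](@natrK R) natrM; apply: le_truncn.
  by rewrite ler_wpM2r ?ler0n //; lra.
move=> u_in v_in /(congr1 val); rewrite /= !inordK ?trunc_lt // => eq_uv.
have -> : u - v = (u + 1) - (v + 1) by ring.
move: u_in v_in => /andP[u_ge _] /andP[v_ge _].
by apply: truncn_eq_close eq_uv; lra.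
Qed.

Definition cell_type : finType :=
  ({ffun 'I_Q -> 'I_(2 * N).+1 * 'I_(2 * N).+1} * 'I_(2 * N).+1)%type.

Definition cell c : cell_type :=
  ([ffun i => (bucket (complex.Re (c.1.1 i 0)), bucket (complex.Im (c.1.1 i 0)))],
   bucket c.1.2).

Definition rank c := Num.truncn (sqnorm c.1.1 * N%:R).

Lemma coord_bounds (v : 'cV[R[i]]_Q) i : sqnorm v <= 1 ->
  -1 <= complex.Re (v i 0) <= 1 /\ -1 <= complex.Im (v i 0) <= 1.
Proof.
move=> /(le_trans (sqnorm_coord_le v i)).
have := sqr_ge0 (complex.Re (v i 0)); have := sqr_ge0 (complex.Im (v i 0)).
by move=> *; split; apply/andP; split; nra.
Qed.

Lemma cell_close c1 c2 : normalized c1 -> normalized c2 -> cell c1 = cell c2 ->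
  `|c1.1.2 - c2.1.2| < N%:R^-1 /\ sqnorm (c1.1.1 - c2.1.1) <= 2 * Q%:R * N%:R^-1.
Proof.
move=> norm1 norm2 cellE.
have [sq1 acc1] := normalized_bounds norm1; have [sq2 acc2] := normalized_bounds norm2.
case: norm1 norm2 => _ acc1_ge0 _ [_ acc2_ge0 _].
split; first by apply: bucket_close (congr1 snd cellE); apply/andP; split; lra.
set d := N%:R^-1; have d_ge0 : 0 <= d by rewrite invr_ge0 ler0n.
have d_le1 : d <= 1 by rewrite invf_le1 ?ler1n ?ltr0n.
have sq_le (a : R) : `|a| < d -> a ^+ 2 <= d.
  by rewrite -real_normK ?num_real // => lt_ad; have := normr_ge0 a; nra.
have -> : 2 * Q%:R * d = \sum_(i < Q) (d + d).
  by rewrite sumr_const card_ord -mulr_natl; ring.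
apply: ler_sum => i _.
have := congr1 (fun c : cell_type => c.1 i) cellE; rewrite /= !ffunE => -[eqRe eqIm].
have [Re1 Im1] := coord_bounds i sq1; have [Re2 Im2] := coord_bounds i sq2.
have := bucket_close Re1 Re2 eqRe; have := bucket_close Im1 Im2 eqIm.
rewrite !mxE; case: (c1.1.1 i 0) => a b; case: (c2.1.1 i 0) => a' b' /=.
by move=> /sq_le dIm /sq_le dRe; apply: lerD.
Qed.

Lemma rank_le c : normalized c -> (rank c <= N)%N.
Proof.
move=> /normalized_bounds[sq_le1 _].
rewrite /rank -[X in (_ <= X)%N](@natrK R); apply: le_truncn.
by rewrite -[X in _ <= X]mul1r ler_wpM2r ?ler0n.
Qed.

Lemma le_rank c1 c2 : sqnorm c1.1.1 <= sqnorm c2.1.1 -> (rank c1 <= rank c2)%N.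
Proof. by move=> le_sq; apply: le_truncn; rewrite ler_wpM2r ?ler0n. Qed.

Lemma rank_close c1 c2 : rank c1 = rank c2 ->
  `|sqnorm c1.1.1 - sqnorm c2.1.1| < N%:R^-1.
Proof. by apply: truncn_eq_close; apply: sqnorm_ge0. Qed.

End Grid.

Lemma zip_take_size (T U : Type) (s : seq T) (t : seq U) :
  zip s (take (size s) t) = zip s t.
Proof. by elim: s t => [|x s IHs] [|y t] //=; rewrite IHs. Qed.

Section Advice.
Variables (R : realType) (Sigma Gamma : finType) (S : seq Sigma -> bool).
Variables (h : nat -> seq Gamma) (M : qfa R (Sigma * Gamma)%type) (eps : R).
Hypothesis eps_lt : eps < 1 / 2.
Hypothesis h_size : forall n, size (h n) = n.
Hypothesis M_decides : forall x : seq Sigma,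
  if S x then 1 - eps <= qfa_accprob M (track2 x (h (size x)))
  else 1 - eps <= qfa_rejprob M (track2 x (h (size x))).
Local Notation Q := (qfa_nst M).

(* [zip] truncates the advice [h n] to the length of [x]. *)
Definition cfg_at (x : seq Sigma) n := steps (init_cfg M) (zip x (h n)).

Lemma normalized_cfg_at x n : normalized (cfg_at x n).
Proof. exact/normalized_steps/normalized_init. Qed.

Lemma cfg_at_cat x z n : (size x <= n)%N ->
  cfg_at (x ++ z) n = steps (cfg_at x n) (zip z (drop (size x) (h n))).
Proof.
move=> x_le; rewrite /cfg_at -{1}(cat_take_drop (size x) (h n)) zip_cat.
  by rewrite /steps foldl_cat zip_take_size.
by rewrite size_takel // h_size.
Qed.

Lemma decides_from x z n : size (x ++ z) = n ->
  let f := run_from (cfg_at x n) (zip z (drop (size x) (h n))) in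
  if S (x ++ z) then 1 - eps <= f.1.2 else 1 - eps <= f.2.
Proof.
move=> sz; have := M_decides (x ++ z); rewrite /qfa_accprob /qfa_rejprob sz.
suff -> : qfa_run M (track2 (x ++ z) (h n)) =
          run_from (cfg_at x n) (zip z (drop (size x) (h n))) by [].
by rewrite /run_from -cfg_at_cat // -sz size_cat leq_addr.
Qed.

Lemma accepts_transfer x y z n : size x = size y -> size (x ++ z) = n ->
  (cfg_at x n).1.2 - (cfg_at y n).1.2 <= acc_tol eps ->
  sqnorm ((cfg_at x n).1.1 - (cfg_at y n).1.1) <= state_tol eps ->
  S (x ++ z) -> S (y ++ z).
Proof.
move=> sxy sz dacc dstate Sx; apply/negPn/negP => Sy.
have szy : size (y ++ z) = n by rewrite size_cat -sxy -size_cat.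
have := decides_from sz; have := decides_from szy; rewrite Sx (negbTE Sy) -sxy /=.
by move=> rej acc; apply: (accept_reject_apart eps_lt (normalized_cfg_at y n) acc rej).
Qed.

Lemma same_outcomes x y n : size x = size y ->
  `|(cfg_at x n).1.2 - (cfg_at y n).1.2| <= acc_tol eps ->
  sqnorm ((cfg_at x n).1.1 - (cfg_at y n).1.1) <= state_tol eps ->
  forall z, size (x ++ z) = n -> S (x ++ z) = S (y ++ z).
Proof.
move=> sxy; rewrite ler_norml => /andP[dacc_lb dacc_ub] dstate z sz.
have szy : size (y ++ z) = n by rewrite size_cat -sxy -size_cat.
apply/idP/idP; first exact: (accepts_transfer sxy sz).
apply: (accepts_transfer (esym sxy) szy); first lra.
by rewrite -sqnormN opprB.
Qed.

Definition N := (Num.truncn ((2 * Q%:R + 4) / state_tol eps)).+1.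

Lemma grid_fine : (2 * Q%:R + 4) * N%:R^-1 <= state_tol eps.
Proof.
have /andP[tol_gt0 _] := state_tol_gt0_le eps_lt.
rewrite ler_pdivrMr ?ltr0n // [X in _ <= X]mulrC -ler_pdivrMr //.
exact: ltW (truncnS_gt _).
Qed.

Lemma N_gt0 : (0 < N)%N. Proof. by []. Qed.

Lemma rank_cfg_at_cat x z n : (size x <= n)%N ->
  (rank N (cfg_at (x ++ z) n) <= rank N (cfg_at x n))%N.
Proof.
move=> x_le; rewrite (cfg_at_cat z x_le); apply: le_rank.
by have /andP[] := steps_acc_gain (cfg_at x n) (zip z (drop (size x) (h n))); lra.
Qed.

Lemma same_outcomes_of_stable_cells x y z n : size x = size y ->
  (size (x ++ z) <= n)%N ->
  cell N (cfg_at (x ++ z) n) = cell N (cfg_at (y ++ z) n) ->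
  rank N (cfg_at x n) = rank N (cfg_at (x ++ z) n) ->
  rank N (cfg_at y n) = rank N (cfg_at (y ++ z) n) ->
  forall z', size (x ++ z') = n -> S (x ++ z') = S (y ++ z').
Proof.
move=> sxy sxz cellE rank_x rank_y.
have x_le : (size x <= n)%N by apply: leq_trans sxz; rewrite size_cat leq_addr.
have y_le : (size y <= n)%N by rewrite -sxy.
have [dacc dstate] :=
  cell_close N_gt0 (normalized_cfg_at _ _) (normalized_cfg_at _ _) cellE.
have gain_x := rank_close N_gt0 rank_x; have gain_y := rank_close N_gt0 rank_y.
rewrite (cfg_at_cat z x_le) (cfg_at_cat z y_le) -sxy in dacc dstate gain_x gain_y.
set w := zip z _ in dacc dstate gain_x gain_y.
have /andP[acc_x gain_acc_x] := steps_acc_gain (cfg_at x n) w.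
have /andP[acc_y gain_acc_y] := steps_acc_gain (cfg_at y n) w.
have stateB := steps_stateB_le (cfg_at x n) (cfg_at y n) w.
have /andP[_ tol_le] := state_tol_gt0_le eps_lt.
have fine := grid_fine.
have Qd_ge0 : 0 <= Q%:R / N%:R :> R by apply: divr_ge0; apply: ler0n.
move: dacc gain_x gain_y; rewrite !ltr_norml => /andP[? ?] /andP[? ?] /andP[? ?].
apply: same_outcomes => //; last by lra.
by rewrite ler_norml; apply/andP; split; lra.
Qed.

Local Notation D := (Delta Sigma).
Implicit Types p q : D.

Definition cfg_of p := cfg_at (dstr p) (dlen p).

Definition slice p := (dlen p, size (dstr p)).

Definition residual_eq p q := forall z, size (dstr p ++ z) = dlen p ->
  S (dstr p ++ z) = S (dstr q ++ z).

(* Residual equivalence alone has infinitely many classes (one family per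
   slice); a class is identified instead by the finitely many cells it meets
   in its slice. *)
Definition residual_cells p : {set cell_type Q N} :=
  [set c | `[< exists p', [/\ slice p' = slice p, residual_eq p' p
                            & cell N (cfg_of p') = c] >]].

Definition eqS p q := residual_cells p = residual_cells q.

Definition leS p q := (rank N (cfg_of p) <= rank N (cfg_of q))%N.

Definition close p q := cell N (cfg_of p) = cell N (cfg_of q).

Lemma slice_eq p q : dlen p = dlen q -> size (dstr p) = size (dstr q) ->
  slice p = slice q.
Proof. by rewrite /slice => -> ->. Qed.

Lemma residual_eq_sym p q : slice p = slice q -> residual_eq p q -> residual_eq q p.
Proof.
by case=> len_pq size_pq pq z; rewrite -len_pq size_cat -size_pq -size_cat => /pq.
Qed.

Lemma residual_eq_trans p q r : slice p = slice q ->
  residual_eq p q -> residual_eq q r -> residual_eq p r.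
Proof.
case=> len_pq size_pq pq qr z sz; rewrite pq // qr //.
by rewrite size_cat -size_pq -size_cat sz.
Qed.

Lemma residual_eq_close p q : slice p = slice q -> close p q -> residual_eq p q.
Proof.
case=> len_pq size_pq close_pq.
have := @same_outcomes_of_stable_cells (dstr p) (dstr q) [::] (dlen p) size_pq.
rewrite !cats0; apply=> [|||//]; first exact: valP p; last by [].
by move: close_pq; rewrite /close /cfg_of -len_pq.
Qed.

Lemma eqS_residual p q : slice p = slice q -> eqS p q <-> residual_eq p q.
Proof.
move=> spq; split=> [eq_pq | pq].
  have : cell N (cfg_of p) \in residual_cells p.
    by rewrite inE; apply/asboolP; exists p.
  rewrite eq_pq inE => /asboolP[p' [sp' p'q p'p]].
  have spp' : slice p = slice p' by rewrite spq sp'.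
  exact: residual_eq_trans spp' (residual_eq_close spp' (esym p'p)) p'q.
apply/setP => c; rewrite !inE; apply/asboolP/asboolP => -[p' [sp' p'r cp']].
  exists p'; split; [by rewrite sp' | exact: residual_eq_trans sp' p'r pq | exact: cp'].
exists p'; split; [by rewrite sp' | | exact: cp'].
exact: residual_eq_trans sp' p'r (residual_eq_sym spq pq).
Qed.

Lemma eqS_of_close p q : dlen p = dlen q -> size (dstr p) = size (dstr q) ->
  close p q -> eqS p q.
Proof.
move=> len_pq size_pq; have spq := slice_eq len_pq size_pq.
by move=> close_pq; apply/(eqS_residual spq); apply: residual_eq_close spq close_pq.
Qed.

Lemma leS_rcons p q a : dlen p = dlen q -> dstr p = rcons (dstr q) a -> leS p q.
Proof.
move=> len_pq str_pq; rewrite /leS /cfg_of str_pq len_pq -cats1.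
exact: rank_cfg_at_cat (valP q).
Qed.

Lemma eqS_of_stable_close p q pz qz z :
  dlen p = dlen q -> size (dstr p) = size (dstr q) ->
  dlen pz = dlen p -> dlen qz = dlen q ->
  dstr pz = dstr p ++ z -> dstr qz = dstr q ++ z ->
  ord_eq leS p pz -> ord_eq leS q qz -> close pz qz -> eqS p q.
Proof.
move=> len_pq size_pq len_pz len_qz str_pz str_qz [le_ppz le_pzp] [le_qqz le_qzq].
move=> close_z; apply/(eqS_residual (slice_eq len_pq size_pq)).
have sz_le : (size (dstr p ++ z) <= dlen p)%N.
  by rewrite -str_pz -len_pz; exact: (valP pz).
apply: (same_outcomes_of_stable_cells size_pq sz_le).
- by move: close_z; rewrite /close /cfg_of str_pz str_qz len_pz len_qz len_pq.
- apply/eqP; rewrite eqn_leq.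
  by move: le_ppz le_pzp; rewrite /leS /cfg_of str_pz len_pz => -> ->.
- apply/eqP; rewrite eqn_leq len_pq.
  by move: le_qqz le_qzq; rewrite /leS /cfg_of str_qz len_qz => -> ->.
Qed.

Lemma eqS_iff_residual p q : dlen p = dlen q -> size (dstr p) = size (dstr q) ->
  eqS p q <->
  (forall z, size (dstr p ++ z) = dlen p -> S (dstr p ++ z) = S (dstr q ++ z)).
Proof. by move=> len_pq size_pq; apply/eqS_residual/slice_eq. Qed.

End Advice.

Theorem theorem3p4 (R : realType) (Sigma : finType) (S : seq Sigma -> bool) :
  in_1QFA_n R S ->
  exists (c d : nat) (eqS leS close : Delta Sigma -> Delta Sigma -> Prop),
    (0 < c)%N /\ (0 < d)%N /\
    is_equivalence eqS /\ is_preorder leS /\ is_closeness close /\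
    (* 1 *) finite_quotient eqS /\
    (* 2 *) (forall p q : Delta Sigma,
               (dlen p) = (dlen q) -> size (dstr p) = size (dstr q) ->
               close p q -> eqS p q) /\
    (* 3 *) (forall (p q : Delta Sigma) (sg : Sigma),
               (dlen p) = (dlen q) -> (dstr p) = rcons (dstr q) sg ->
               leS p q) /\
    (* 4 *) (forall (p q pz qz : Delta Sigma) (z : seq Sigma),
               (dlen p) = (dlen q) -> size (dstr p) = size (dstr q) ->
               (dlen pz) = (dlen p) -> (dlen qz) = (dlen q) ->
               (dstr pz) = (dstr p) ++ z -> (dstr qz) = (dstr q) ++ z ->
               ord_eq leS p pz -> ord_eq leS q qz -> close pz qz ->
               eqS p q) /\
    (* 5 *) (forall p q : Delta Sigma,
               (dlen p) = (dlen q) -> size (dstr p) = size (dstr q) ->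
               (eqS p q <->
                forall z : seq Sigma, size ((dstr p) ++ z) = (dlen p) ->
                  S ((dstr p) ++ z) = S ((dstr q) ++ z))) /\
    (* 6 *) (forall s : seq (Delta Sigma), desc_chain leS s -> (size s <= c)%N) /\
    (* 7 *) (forall s : seq (Delta Sigma), discrepancy_list close s ->
               (size s <= d)%N).
Proof.
case=> Gamma [h [M [eps [_ eps_lt h_size M_decides]]]].
pose p0 : Delta Sigma := exist _ ([::], 0%N) isT.
exists (N M eps).+1, #|cell_type (qfa_nst M) (N M eps)|.+1.
exists (eqS S h M eps), (leS h M eps), (close h M eps).
split; first by []; split; first by [].
split; first exact: kernel_equivalence.
split; first by split=> [a | a b c]; [exact: leqnn | exact: leq_trans].
split; first by split=> [a | a b]; [by [] | exact: esym].
split; first exact: finite_quotient_kernel p0.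
split; first exact: (eqS_of_close eps_lt h_size M_decides).
split; first exact: (leS_rcons M eps h_size).
split; first exact: (eqS_of_stable_close eps_lt h_size M_decides).
split; first exact: (eqS_iff_residual eps_lt h_size M_decides).
split=> s.
  by apply: desc_chain_measure => p; exact: rank_le (normalized_cfg_at _ _ _ _).
by move=> /discrepancy_kernel_size /leqW.
Qed.
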